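(* (a) For the complete graph $K_n$ with $n\ge 2$, $\gamma(K_n)=\dfrac{n}{n-1}$. (b) For the cycle $C_n$ with $n\ge 3$, $\gamma(C_n)=\dfrac{n}{\lfloor n/2\rfloor\,\lceil n/2\rceil}$.
   Context: For a finite simple undirected graph $G$ with $n$ vertices, let $\mathcal{F}=\{x\in\mathbb{R}^{V(G)} : \sum_{v} x_v = 0,\ \|x\|_\infty = 1\}$, for $x\in\mathcal{F}$ let $\gamma_x(G)=\max_{uv\in E(G)}|x_u-x_v|$, and $\gamma(G)=\min_{x\in\mathcal{F}}\gamma_x(G)$. *)

From HB Require Import structures.
From mathcomp Require Import all_boot all_order all_algebra.
From mathcomp Require Import reals.
Set Implicit Arguments. Unset Strict Implicit. Unset Printing Implicit Defensive.
Import Order.TTheory GRing.Theory Num.Theory.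
Local Open Scope ring_scope.

Definition simple_graph (T : finType) (e : rel T) : Prop :=
  (forall u v, e u v = e v u) /\ (forall u, ~~ e u u).

Definition supnorm (R : realType) (T : finType) (x : T -> R) : R :=
  \big[Num.max/0]_(v : T) `|x v|.

Definition feasible (R : realType) (T : finType) (x : T -> R) : Prop :=
  \sum_(v : T) x v = 0 /\ supnorm x = 1.

Definition gamma_x (R : realType) (T : finType) (e : rel T) (x : T -> R) : R :=
  \big[Num.max/0]_(p : T * T | e p.1 p.2) `|x p.1 - x p.2|.

(* "gamma(G) = g", where gamma(G) = min_{x in F} gamma_x(G):
   g is attained by some feasible x and is a lower bound over F. *)
Definition is_gamma (R : realType) (T : finType) (e : rel T) (g : R) : Prop :=
  (exists2 x : T -> R, feasible x & gamma_x e x = g) /\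
  (forall x : T -> R, feasible x -> g <= gamma_x e x).

Definition Kn_rel (n : nat) : rel 'I_n := fun i j => i != j.

Definition Cn_rel (n : nat) : rel 'I_n :=
  fun i j => (val j == (val i).+1 %% n)%N || (val i == (val j).+1 %% n)%N.

From HB Require Import structures.
From mathcomp Require Import all_boot all_order all_algebra.
From mathcomp Require Import reals ring lra zify.
Import Order.TTheory GRing.Theory Num.Theory.
Set Implicit Arguments. Unset Strict Implicit. Unset Printing Implicit Defensive.
Local Open Scope ring_scope.

(* Both graphs are vertex-transitive; let d be the graph distance from a base
   vertex and S the sum of all distances.  If x is feasible with
   gamma_x(G) = c, then up to sign and an automorphism x equals 1 at the base
   vertex, and along a geodesic x drops by at most c per edge, so
   x_u >= 1 - c d_u; summing gives 0 >= n - c S, i.e. c >= n / S.  Conversely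
   x_u = 1 - (n / S) d_u sums to 0 and changes by at most n / S along edges; it
   lies in [-1, 1] as soon as n d_u <= 2 S.  For K_n, S = n - 1; for C_n,
   S = floor(n/2) ceil(n/2). *)

Section GammaX.
Variables (R : realType) (T : finType) (e : rel T).
Implicit Types (x : T -> R).

Lemma gamma_x_ge0 x : 0 <= gamma_x e x.
Proof. exact: bigmax_ge_id. Qed.

Lemma gamma_x_ge_edge x u w : e u w -> `|x u - x w| <= gamma_x e x.
Proof. by move=> euw; rewrite /gamma_x (bigD1 (u, w)) //= le_max lexx. Qed.

Lemma gamma_x_le x c :
  0 <= c -> (forall u w, e u w -> `|x u - x w| <= c) -> gamma_x e x <= c.
Proof. by move=> c_ge0 le_c; apply: bigmax_le => // -[u w]; apply: le_c. Qed.

Lemma gamma_xN x : gamma_x e (fun v => - x v) = gamma_x e x.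
Proof. by apply: eq_bigr => p _; rewrite -opprD normrN. Qed.

Lemma gamma_x_comp_le x (s : T -> T) :
  (forall u w, e u w -> e (s u) (s w)) -> gamma_x e (x \o s) <= gamma_x e x.
Proof.
move=> s_hom; apply: gamma_x_le => [|u w /s_hom]; first exact: gamma_x_ge0.
exact: gamma_x_ge_edge.
Qed.

End GammaX.

Section Feasible.
Variables (R : realType) (T : finType).
Implicit Types (x : T -> R).

Lemma supnorm_le x c : 0 <= c -> (forall v, `|x v| <= c) -> supnorm x <= c.
Proof. by move=> c_ge0 le_c; apply: bigmax_le. Qed.

Lemma supnorm_ge x v : `|x v| <= supnorm x.
Proof. exact: le_bigmax. Qed.

Lemma supnorm_eq1 x v : (forall u, `|x u| <= 1) -> `|x v| = 1 -> supnorm x = 1.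
Proof.
move=> le1 xv1; apply/le_anti; rewrite supnorm_le //=.
by rewrite -{1}xv1 supnorm_ge.
Qed.

Lemma supnorm1_attained x : supnorm x = 1 -> exists v, `|x v| = 1.
Proof.
case: (pickP (@predT T)) => [v _ | T0] x1.
  have [u _ supE] := @eq_bigmax _ _ _ 0 v predT (fun v => `|x v|) isT
    (fun v _ => normr_ge0 (x v)).
  by exists u; rewrite -supE.
by move: x1; rewrite /supnorm big_pred0 // => /eqP; rewrite eq_sym oner_eq0.
Qed.

Lemma feasibleN x : feasible x -> feasible (fun v => - x v).
Proof.
case=> sum0 sup1; split; first by rewrite sumrN sum0 oppr0.
by rewrite -sup1; apply: eq_bigr => v _; rewrite normrN.
Qed.

Lemma feasible_comp x (s : T -> T) : injective s -> feasible x -> feasible (x \o s).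
Proof.
move=> s_inj [sum0 sup1]; split; first by rewrite -[RHS]sum0 [in RHS](reindex_inj s_inj).
have [v xv1] := supnorm1_attained sup1.
apply: (supnorm_eq1 (v := invF s_inj v)) => [u|]; last by rewrite /= f_invF.
by rewrite -sup1 /= supnorm_ge.
Qed.

End Feasible.

Section VertexTransitive.
Variables (R : realType) (T : finType) (e : rel T) (t0 : T) (d : T -> nat).
Hypothesis e_sym : symmetric e.
Hypothesis d_eq0 : forall u, (d u == 0)%N = (u == t0).
Hypothesis d_edge : forall u w, e u w -> (d u <= (d w).+1)%N.
Hypothesis d_descent : forall u, (0 < d u)%N -> exists2 w, e u w & (d w < d u)%N.
Hypothesis e_transitive : forall v, exists s : T -> T,
  [/\ injective s, s t0 = v & forall u w, e u w -> e (s u) (s w)].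
Hypothesis sum_d_gt0 : (0 < \sum_u d u)%N.
Hypothesis d_le_mean : forall u, (#|T| * d u <= 2 * \sum_u d u)%N.

Let g : R := #|T|%:R / (\sum_u d u)%:R.

Let sum_dR_gt0 : 0 < (\sum_u d u)%:R :> R.
Proof. by rewrite ltr0n. Qed.

Let g_ge0 : 0 <= g.
Proof. by rewrite divr_ge0 // ltW. Qed.

Lemma gamma_x_decay_from_peak (x : T -> R) u :
  x t0 = 1 -> 1 - gamma_x e x * (d u)%:R <= x u.
Proof.
move=> x_t0; set G := gamma_x e x; have G_ge0 : 0 <= G := gamma_x_ge0 e x.
suff: forall k u, d u = k -> 1 - G * (d u)%:R <= x u by apply.
elim/ltn_ind => n IH {}u du; subst n.
have [du0 | du_neq0] := eqVneq (d u) 0%N.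
  have /eqP u_t0 : u == t0 by rewrite -d_eq0 du0.
  by rewrite du0 mulr0 subr0 u_t0 x_t0.
have /d_descent[w euw lt_wu] : (0 < d u)%N by rewrite lt0n.
have x_uw : `|x u - x w| <= G := gamma_x_ge_edge x euw.
have le_dist : G * ((d w)%:R + 1) <= G * (d u)%:R.
  by rewrite ler_wpM2l // natr1 ler_nat.
have := IH _ lt_wu w erefl; have := ler_norm (x w - x u); rewrite distrC; lra.
Qed.

Lemma gamma_x_ge_at_peak (x : T -> R) : feasible x -> x t0 = 1 -> g <= gamma_x e x.
Proof.
move=> [sum0 _] x_t0; set G := gamma_x e x.
have : \sum_u (1 - G * (d u)%:R) <= \sum_u x u.
  by apply: ler_sum => u _; apply: gamma_x_decay_from_peak.
rewrite sum0 sumrB sumr_const -mulr_sumr -natr_sum => le_sum.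
by rewrite /g ler_pdivrMr // mulrC; lra.
Qed.

Lemma gamma_x_ge_feasible (x : T -> R) : feasible x -> g <= gamma_x e x.
Proof.
wlog x_peak : x / exists v, x v = 1.
  move=> gen fx; have [v] := supnorm1_attained fx.2; case: ger0P => _ xv1.
    by apply: gen => //; exists v.
  by rewrite -gamma_xN; apply: gen; [exists v | exact: feasibleN].
move=> fx; have [v xv1] := x_peak; have [s [s_inj s_t0 s_hom]] := e_transitive v.
apply: le_trans (gamma_x_comp_le x s_hom).
by apply: gamma_x_ge_at_peak; [exact: feasible_comp | rewrite /= s_t0].
Qed.

Let x_dist (u : T) : R := 1 - g * (d u)%:R.

Let x_dist_feasible : feasible x_dist.
Proof.
have d_t0 : d t0 = 0%N by apply/eqP; rewrite d_eq0.
split.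
  by rewrite sumrB sumr_const -mulr_sumr -natr_sum mulfVK ?gt_eqF ?subrr.
apply: (supnorm_eq1 (v := t0)) => [u|]; last by rewrite /x_dist d_t0 mulr0 subr0 normr1.
have gd_ge0 : 0 <= g * (d u)%:R by rewrite mulr_ge0.
have gd_le2 : g * (d u)%:R <= 2.
  by rewrite mulrAC ler_pdivrMr // -natrM -(natrM _ 2) ler_nat.
by rewrite /x_dist ler_norml; apply/andP; split; lra.
Qed.

Let gamma_x_dist_le : gamma_x e x_dist <= g.
Proof.
apply: gamma_x_le => // u w euw.
have le_uw : (d u)%:R <= (d w)%:R + 1 :> R by rewrite natr1 ler_nat d_edge.
have le_wu : (d w)%:R <= (d u)%:R + 1 :> R by rewrite natr1 ler_nat d_edge // e_sym.
have -> : x_dist u - x_dist w = g * ((d w)%:R - (d u)%:R) by rewrite /x_dist; ring.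
rewrite normrM ger0_norm // ler_piMr // ler_norml.
by apply/andP; split; lra.
Qed.

Theorem is_gamma_vertex_transitive : is_gamma e (#|T|%:R / (\sum_u d u)%:R : R).
Proof.
split; last exact: gamma_x_ge_feasible.
exists x_dist => //; apply/le_anti.
by rewrite gamma_x_dist_le gamma_x_ge_feasible.
Qed.

End VertexTransitive.

Lemma Kn_rel_sym n : symmetric (@Kn_rel n).
Proof. by move=> u w; rewrite /Kn_rel eq_sym. Qed.

Lemma Kn_rel_addl m (v u w : 'I_m.+1) : Kn_rel (v + u) (v + w) = Kn_rel u w.
Proof. by rewrite /Kn_rel (inj_eq (addrI v)). Qed.

Lemma Kn_is_gamma (R : realType) m :
  is_gamma (@Kn_rel m.+2) (m.+2%:R / m.+1%:R : R).
Proof.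
pose d (u : 'I_m.+2) := nat_of_bool (u != ord0).
have sum_d : (\sum_u d u = m.+1)%N.
  by rewrite -big_mkcond sum1dep_card cardsE cardC1 card_ord.
have -> : m.+2%:R / m.+1%:R = #|'I_m.+2|%:R / (\sum_u d u)%:R :> R.
  by rewrite card_ord sum_d.
apply: (@is_gamma_vertex_transitive R _ _ ord0).
- exact: Kn_rel_sym.
- by move=> u; rewrite /d; case: (u == ord0).
- by move=> u w _; rewrite (leq_trans (leq_b1 _)).
- move=> u; rewrite /d lt0b => u_neq0; exists ord0; first exact: u_neq0.
  by rewrite eqxx u_neq0.
- move=> v; exists (fun u => v + u); split=> [||u w]; first exact: addrI.
    exact: addr0.
  by rewrite /= Kn_rel_addl.
- by rewrite sum_d.
- by move=> u; rewrite sum_d card_ord /d; case: (u != ord0) => /=; lia.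
Qed.

Definition cdist (n k : nat) : nat := minn k (n - k).

Lemma sum_cdistSS n :
  (\sum_(0 <= k < n.+2) cdist n.+2 k = \sum_(0 <= k < n) cdist n k + n.+1)%N.
Proof.
rewrite big_nat_recl // big_nat_recr //= (eq_big_nat _ _ (F2 := fun k => cdist n k + 1)%N).
  by rewrite big_split /= sum_nat_const_nat /cdist; lia.
by move=> k /andP[_ lt_kn]; rewrite /cdist; lia.
Qed.

Lemma sum_cdist n : (\sum_(0 <= k < n) cdist n k = n./2 * uphalf n)%N.
Proof.
elim/ltn_ind: n => -[|[|n]] IH; first by rewrite big_geq.
  by rewrite big_nat1.
rewrite sum_cdistSS IH //= uphalf_half; lia.
Qed.

Lemma cdist_succ n i : (i < n)%N ->
  (cdist n (i.+1 %% n) <= (cdist n i).+1)%N && (cdist n i <= (cdist n (i.+1 %% n)).+1)%N.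
Proof.
move=> lt_in; rewrite /cdist; have [lt_Si | ] := ltnP i.+1 n.
  by rewrite modn_small //; apply/andP; split; lia.
move=> le_nSi; have -> : i.+1 = n by lia.
by rewrite modnn; apply/andP; split; lia.
Qed.

Lemma Cn_rel_sym n : symmetric (@Cn_rel n).
Proof. by move=> u w; rewrite /Cn_rel orbC. Qed.

Lemma Cn_relE m (u w : 'I_m.+1) : Cn_rel u w = (w == u + Zp1) || (u == w + Zp1).
Proof. by rewrite /Cn_rel -!val_eqE /= !modnDmr !addn1. Qed.

Lemma Cn_rel_addl m (v u w : 'I_m.+1) : Cn_rel (v + u) (v + w) = Cn_rel u w.
Proof. by rewrite !Cn_relE -!addrA !(inj_eq (addrI v)). Qed.

Lemma Cn_is_gamma (R : realType) m :
  is_gamma (@Cn_rel m.+3) (m.+3%:R / ((m.+3./2)%:R * (uphalf m.+3)%:R) : R).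
Proof.
pose d (u : 'I_m.+3) := cdist m.+3 u.
have sum_d : (\sum_u d u = m.+3./2 * uphalf m.+3)%N.
  by rewrite -(big_mkord xpredT (cdist m.+3)) sum_cdist.
have -> : m.+3%:R / ((m.+3./2)%:R * (uphalf m.+3)%:R) =
          #|'I_m.+3|%:R / (\sum_u d u)%:R :> R by rewrite card_ord sum_d natrM.
apply: (@is_gamma_vertex_transitive R _ _ ord0).
- exact: Cn_rel_sym.
- by move=> u; rewrite /d /cdist -val_eqE /=; have := ltn_ord u; lia.
- move=> u w /orP[/eqP w_succ | /eqP u_succ].
    by have /andP[_] := cdist_succ (ltn_ord u); rewrite /d w_succ.
  by have /andP[] := cdist_succ (ltn_ord w); rewrite /d u_succ.
- move=> u; rewrite /d /cdist => du_gt0; have lt_u := ltn_ord u.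
  have [le_u_half | gt_u_half] := leqP u (m.+3 - u).
    exists (inord u.-1); last by rewrite inordK; lia.
    by rewrite /Cn_rel /= inordK ?prednK ?modn_small ?eqxx ?orbT //; lia.
  exists (inord (u.+1 %% m.+3)); first by rewrite /Cn_rel /= inordK ?eqxx ?ltn_pmod.
  rewrite inordK ?ltn_pmod //; have [lt_Su | ge_Su] := ltnP u.+1 m.+3.
    by rewrite modn_small //; lia.
  have -> : u.+1 = m.+3 by lia.
  by rewrite modnn; lia.
- move=> v; exists (fun u => v + u); split=> [||u w]; first exact: addrI.
    exact: addr0.
  by rewrite /= Cn_rel_addl.
- by rewrite sum_d.
- move=> u; rewrite sum_d card_ord /d /cdist uphalf_half; nia.
Qed.

Theorem corollary3p3 (R : realType) :
  (forall n : nat, (2 <= n)%N ->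
     is_gamma (@Kn_rel n) (n%:R / (n.-1)%:R : R)) /\
  (forall n : nat, (3 <= n)%N ->
     is_gamma (@Cn_rel n) (n%:R / ((n./2)%:R * (uphalf n)%:R) : R)).
Proof.
split.
- by case=> [|[|m]] // _; apply: Kn_is_gamma.
- by case=> [|[|[|m]]] // _; apply: Cn_is_gamma.
Qed.
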